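(* Let $X$ be a Tychonoff space and let $\tau$ be the $P$-number of $X$. Suppose $X$ has a $\tau$-discrete basis of clopen sets, i.e. a base $\mathcal B=\bigcup_{\alpha<\tau}\mathcal B_\alpha$ for the topology of $X$ consisting of clopen sets, where each $\mathcal B_\alpha$ is a discrete family in $X$. Then $X$ is a generalized ordered space (GO-space).
   Context: All spaces are Tychonoff. The $P$-number of a space $X$ is $|X|$ if $X$ is discrete; otherwise it is the largest cardinal $\tau$ such that the intersection of any family of fewer than $\tau$ open subsets of $X$ is open (equivalently, the minimum cardinality of a family of open sets whose intersection is not open). A family of subsets of $X$ is discrete if every point of $X$ has a neighborhood meeting at most one member of the family. A linearly ordered topological space (LOTS) is a space whose topology is generated by the open intervals and open rays of some linear order; a GO-space (generalized ordered space) is a space homeomorphic to a subspace of a LOTS. *)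

From HB Require Import structures.
From mathcomp Require Import all_boot all_order all_algebra.
From mathcomp Require Import all_classical all_reals all_analysis.
From mathcomp Require Import Rstruct Rstruct_topology.
Set Implicit Arguments. Unset Strict Implicit. Unset Printing Implicit Defensive.
Import Order.TTheory GRing.Theory Num.Theory.
Local Open Scope classical_set_scope.

Definition completely_regular (X : topologicalType) : Prop :=
  forall (A : set X) (x : X), closed A -> ~ A x ->
    exists f : X -> Rdefinitions.R,
      continuous f /\ f x = 0%R /\ (forall a, A a -> f a = 1%R).

Definition tychonoff_space (X : topologicalType) : Prop :=
  accessible_space X /\ completely_regular X.

Definition discrete_top (X : topologicalType) : Prop :=
  forall A : set X, open A.

(* [set: A] has cardinality equal to the P-number of X. *)
Definition is_Pnumber (X : topologicalType) (A : Type) : Prop :=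
  (discrete_top X -> card_eq [set: A] [set: X]) /\
  (~ discrete_top X ->
     (exists G : A -> set X, (forall a, open (G a)) /\ ~ open (\bigcap_a G a)) /\
     (forall (J : Type) (G : J -> set X),
        card_le [set: J] [set: A] -> ~ card_le [set: A] [set: J] ->
        (forall j, open (G j)) -> open (\bigcap_j G j))).

Definition discrete_family (X : topologicalType) (F : set (set X)) : Prop :=
  forall x : X, exists2 U, nbhs x U &
    forall V W, F V -> F W -> U `&` V !=set0 -> U `&` W !=set0 -> V = W.

Definition GO_space (X : topologicalType) : Prop :=
  exists (d : Order.disp_t) (L : orderType d) (f : X -> order_topology L),
    injective f /\
    (forall U : set X, open U <-> exists V : set (order_topology L), open V /\ U = f @^-1` V).

(* Well-order the index set A so that every proper initial segment has fewer
   than tau elements (any well-order if X is discrete), fix any total order on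
   the subsets of X, and send x to the function a |-> (member of B a containing
   x, 1), ordered lexicographically.  Each coordinate is locally constant since
   B a is a discrete family of clopen sets, and by the definition of the
   P-number the fibres of the fewer than tau coordinates below an index meet in
   an open set; this makes the map continuous into the order topology.  It is
   injective because X is T1, and a basic set b in B a containing x is the
   preimage of the interval between the codes obtained by replacing the a-th
   coordinate (b, 1) of the code of x by (b, 0) and (b, 2). *)

From HB Require Import structures.
From mathcomp Require Import all_boot all_order all_algebra.
From mathcomp Require Import all_classical all_reals all_analysis.
From mathcomp Require wochoice.
From Stdlib Require Import Inverse_Image.
Set Implicit Arguments. Unset Strict Implicit. Unset Printing Implicit Defensive.
Import Order.TTheory.
Local Open Scope classical_set_scope.

Record strict_total_order (T : Type) := StrictTotalOrder {
  sto_lt :> T -> T -> Prop;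
  sto_irr : forall x, ~ sto_lt x x;
  sto_trans : forall x y z, sto_lt x y -> sto_lt y z -> sto_lt x z;
  sto_total : forall x y, x <> y -> sto_lt x y \/ sto_lt y x }.

Record strict_well_order (T : Type) := StrictWellOrder {
  swo_sto :> strict_total_order T;
  swo_wf : well_founded swo_sto }.

Lemma sto_trichotomy (T : Type) (o : strict_total_order T) (x y : T) :
  [\/ o x y, x = y | o y x].
Proof.
have [->|nxy] := pselect (x = y); first exact: Or32.
by case: (sto_total o nxy); [exact: Or31 | exact: Or33].
Qed.

Lemma sto_asym (T : Type) (o : strict_total_order T) (x y : T) :
  o x y -> ~ o y x.
Proof. by move=> oxy /(sto_trans oxy); apply: sto_irr. Qed.

Lemma swo_min (T : Type) (w : strict_well_order T) (P : T -> Prop) :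
  (exists x, P x) -> exists2 x, P x & forall y, w y x -> ~ P y.
Proof.
move=> [x Px]; apply: contrapT => nmin; move: x Px.
apply: (well_founded_ind (swo_wf w)) => x IH Px.
by apply: nmin; exists x => // y /IH.
Qed.

Definition ordered_by (T : Type) (o : strict_total_order T) : Type := T.

Fact ordered_by_display : Order.disp_t. Proof. exact: Order.Disp tt tt. Qed.

Section OrderedBy.
Variables (T : Type) (o : strict_total_order T).

HB.instance Definition _ := gen_eqMixin (ordered_by o).
HB.instance Definition _ := gen_choiceMixin (ordered_by o).

Let lt (x y : ordered_by o) := `[< o x y >].

Let lt_irr : irreflexive lt.
Proof. by move=> x; apply/asboolP/sto_irr. Qed.

Let lt_trans : transitive lt.
Proof. by move=> y x z /asboolP oxy /asboolP oyz; apply/asboolP/(sto_trans oxy). Qed.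

Let lt_total x y : x != y -> lt x y || lt y x.
Proof. by move=> /eqP/(sto_total o)[] oxy; apply/orP; [left|right]; apply/asboolP. Qed.

HB.instance Definition _ := Order.LtOrder.Build ordered_by_display (ordered_by o)
  (fun _ _ => erefl) (fun _ _ => erefl) (fun _ _ => erefl) lt_irr lt_trans lt_total.

Lemma ordered_by_ltE (x y : ordered_by o) : (x < y)%O <-> o x y.
Proof. by split => /asboolP. Qed.

End OrderedBy.

Section Lexicographic.
Variables (I : Type) (w : strict_well_order I) (d : Order.disp_t) (V : orderType d).
Implicit Types (f g h : I -> V) (a b c : I) (u v : V).

Definition lexlt f g : Prop :=
  exists2 b, (forall c, w c b -> f c = g c) & (f b < g b)%O.

Lemma first_difference f g :
  f <> g -> exists2 b, (forall c, w c b -> f c = g c) & f b <> g b.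
Proof.
move=> nfg; have [|b b_diff b_min] := swo_min w (P := fun b => f b <> g b).
  by apply: contrapT => /forallNP fg; apply/nfg/funext => b; apply: contrapT.
by exists b => // c /b_min/contrapT.
Qed.

Lemma lexlt_irr f : ~ lexlt f f.
Proof. by case=> b _; rewrite ltxx. Qed.

Lemma lexlt_trans f g h : lexlt f g -> lexlt g h -> lexlt f h.
Proof.
move=> [b1 E1 L1] [b2 E2 L2].
case: (sto_trichotomy w b1 b2) => [b12|eb|b21].
- exists b1; last by rewrite -(E2 _ b12).
  by move=> c cb1; rewrite E1 // E2 //; apply: sto_trans b12.
- subst b2; exists b1; last exact: lt_trans L2.
  by move=> c cb1; rewrite E1 // E2.
- exists b2; last by rewrite (E1 _ b21).
  by move=> c cb2; rewrite E1 ?E2 //; apply: sto_trans b21.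
Qed.

Lemma lexlt_total f g : f <> g -> lexlt f g \/ lexlt g f.
Proof.
move=> /first_difference[b E /eqP]; rewrite neq_lt => /orP[L|L].
  by left; exists b.
by right; exists b => // c /E.
Qed.

Definition lex_order : strict_total_order (I -> V) :=
  StrictTotalOrder lexlt_irr lexlt_trans lexlt_total.

Definition update f a v : I -> V := fun c => if pselect (c = a) then v else f c.

Lemma update_eq f a v : update f a v a = v.
Proof. by rewrite /update; case: pselect. Qed.

Lemma update_neq f a v c : c <> a -> update f a v c = f c.
Proof. by rewrite /update; case: pselect. Qed.

Lemma lexlt_update_lt f a v : (v < f a)%O -> lexlt (update f a v) f.
Proof.
move=> vfa; exists a; last by rewrite update_eq.
by move=> c ca; rewrite update_neq // => ec; move: ca; rewrite ec; apply: sto_irr.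
Qed.

Lemma lexlt_update_gt f a v : (f a < v)%O -> lexlt f (update f a v).
Proof.
move=> fav; exists a; last by rewrite update_eq.
by move=> c ca; rewrite update_neq // => ec; move: ca; rewrite ec; apply: sto_irr.
Qed.

Lemma lexlt_update_l f h a u :
  lexlt (update f a u) h -> (u <= h a)%O \/ forall v, lexlt (update f a v) h.
Proof.
move=> [b E L]; case: (sto_trichotomy w b a) => [ba|eba|ab].
- have nba : b <> a by move=> eba; move: ba; rewrite eba; apply: sto_irr.
  right=> v; exists b; last by rewrite update_neq // -(update_neq f u nba).
  move=> c cb; have nca : c <> a.
    by move=> eca; apply: (sto_asym ba); rewrite -eca.
  by rewrite update_neq // -(update_neq f u nca) E.
- by left; rewrite -eba -(update_eq f b u) ltW // {1}eba.
- by left; rewrite -(E _ ab) update_eq.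
Qed.

End Lexicographic.

Section LexicographicUpdate.
Variables (I : Type) (w : strict_well_order I) (d : Order.disp_t) (V : orderType d).
Implicit Types (f h : I -> V) (a : I) (u v : V).

Lemma lexlt_update_r f h a v :
  lexlt w h (update f a v) -> (h a <= v)%O \/ forall u, lexlt w h (update f a u).
Proof.
(* Reversing the order of [V] reverses [lexlt]. *)
move=> h_hi; have hi_h : @lexlt _ w _ V^d (update f a v) h.
  by case: h_hi => b E L; exists b => // c /E.
case: (lexlt_update_l hi_h) => [|hi_h']; first by left.
by right=> u; case: (hi_h' u) => b E L; exists b => // c /E.
Qed.

Lemma lexlt_update_between f h a u v :
  lexlt w (update f a u) h -> lexlt w h (update f a v) -> (u <= h a <= v)%O.
Proof.
move=> lo_h h_hi; apply/andP; split.
  case: (lexlt_update_l lo_h) => // /(_ v) hi_h.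
  by case: (lexlt_irr (lexlt_trans h_hi hi_h)).
case: (lexlt_update_r h_hi) => // /(_ u) h_lo.
by case: (lexlt_irr (lexlt_trans lo_h h_lo)).
Qed.

End LexicographicUpdate.

Section WellOrderRel.
Variables (T : Type) (R : rel {classic T}).
Hypothesis R_wo : wochoice.well_order R.

Lemma well_order_min (P : {pred {classic T}}) x :
  P x -> exists2 z, P z & forall y, P y -> R z y.
Proof.
by move=> Px; have [|z [[Pz lbz] _]] := R_wo (A := P); [exists x | exists z].
Qed.

Lemma well_order_total x y : R x y \/ R y x.
Proof.
have [|z /pred2P[]-> lbz] := @well_order_min (pred2 x y) x; first by rewrite !inE eqxx.
- by left; apply/lbz/pred2P/or_intror.
- by right; apply/lbz/pred2P/or_introl.
Qed.

Lemma well_order_anti x y : R x y -> R y x -> x = y.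
Proof.
move=> Rxy Ryx; have [|z [_ unique_z]] := R_wo (A := pred2 x y).
  by exists x; rewrite !inE eqxx.
have minimum_x : wochoice.minimum_of R (pred2 x y) x.
  split; first by rewrite !inE eqxx.
  by move=> t; rewrite !inE => /pred2P[]->//; case: (well_order_total x x).
have minimum_y : wochoice.minimum_of R (pred2 x y) y.
  split; first by rewrite !inE eqxx orbT.
  by move=> t; rewrite !inE => /pred2P[]->//; case: (well_order_total y y).
by rewrite -(unique_z _ minimum_x) (unique_z _ minimum_y).
Qed.

Lemma well_order_trans x y z : R x y -> R y z -> R x z.
Proof.
move=> Rxy Ryz; have [|m /or3P[]/eqP-> lbm] := @well_order_min (pred3 x y z) x.
- by rewrite !inE eqxx.
- by apply: lbm; rewrite !inE eqxx !orbT.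
- by rewrite (well_order_anti Rxy (lbm x _)) // !inE eqxx.
- by rewrite -(well_order_anti Ryz (lbm y _)) // !inE eqxx orbT.
Qed.

Let lt (x y : T) := ~ R y x.

Let lt_irr x : ~ lt x x.
Proof. by case: (well_order_total x x) => Rxx; apply. Qed.

Let lt_trans x y z : lt x y -> lt y z -> lt x z.
Proof.
move=> nRyx nRzy Rzx; case: (well_order_total x y) => [Rxy|//].
exact/nRzy/(well_order_trans Rzx Rxy).
Qed.

Let lt_total x y : x <> y -> lt x y \/ lt y x.
Proof.
move=> nxy; apply: contrapT => /not_orP[/contrapT Ryx /contrapT Rxy].
exact/nxy/well_order_anti.
Qed.

Let lt_wf : well_founded lt.
Proof.
move=> x; apply: contrapT => nAx.
have [|m nAm lbm] := @well_order_min [pred y | `[< ~ Acc lt y >]] x.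
  exact/asboolP.
move/asboolP: nAm; apply; constructor=> y nRmy; apply: contrapT => nAy.
exact/nRmy/lbm/asboolP.
Qed.

Lemma strict_well_order_of_well_order : inhabited (strict_well_order T).
Proof.
by constructor; exact: (@StrictWellOrder _ (StrictTotalOrder lt_irr lt_trans lt_total) lt_wf).
Qed.

End WellOrderRel.

Lemma exists_strict_well_order (T : Type) : inhabited (strict_well_order T).
Proof.
have [R R_wo] := wochoice.well_ordering_principle {classic T}.
exact: strict_well_order_of_well_order R_wo.
Qed.

Lemma proj1_sig_inj (T : Type) (P : T -> Prop) : injective (@proj1_sig T P).
Proof. by move=> [x px] [y py] /= xy; apply: eq_exist. Qed.

Lemma card_leT_injP (T U : Type) :
  card_le [set: T] [set: U] <-> exists f : T -> U, injective f.
Proof.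
split=> [/card_leP[f]|[f f_inj]].
  exists (fun t => val (f (SigSub (mem_set (I : [set: T] t))))) => t1 t2 /val_inj ft12.
  by have /(congr1 val) := @inj _ _ _ f _ _ (mem_set I) (mem_set I) ft12.
apply: (@card_le_trans _ _ _ (f @` setT)); last exact: subset_card_le.
by have := @inj_card_eq _ _ setT f (in2W f_inj); rewrite card_eq_le => /andP[].
Qed.

Section Pullback.
Variables (T U : Type) (e : T -> U) (e_inj : injective e) (w : strict_well_order U).

Let lt (x y : T) := w (e x) (e y).

Let lt_irr x : ~ lt x x. Proof. exact: sto_irr. Qed.

Let lt_trans x y z : lt x y -> lt y z -> lt x z. Proof. exact: sto_trans. Qed.

Let lt_total x y : x <> y -> lt x y \/ lt y x.
Proof. by move=> nxy; apply: sto_total => /e_inj. Qed.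

Let lt_wf : well_founded lt. Proof. exact: wf_inverse_image (swo_wf w). Qed.

Definition pullback_well_order : strict_well_order T :=
  @StrictWellOrder _ (StrictTotalOrder lt_irr lt_trans lt_total) lt_wf.

End Pullback.

(* The initial ordinal of the cardinality of [T]. *)
Lemma exists_initial_well_order (T : Type) : exists w : strict_well_order T,
  forall b, ~ exists f : T -> {c | w c b}, injective f.
Proof.
have [w0] := exists_strict_well_order T.
pose long b := exists f : T -> {c | w0 c b}, injective f.
have [[b1 long_b1]|short] := pselect (exists b, long b); last first.
  by exists w0 => b long_b; apply: short; exists b.
have [b0 [e e_inj] b0_min] := swo_min w0 (ex_intro long b1 long_b1).
have ve_inj : injective (fun t => proj1_sig (e t)) by move=> t1 t2 /proj1_sig_inj/e_inj.
exists (pullback_well_order ve_inj w0) => b [f f_inj].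
apply: (b0_min (proj1_sig (e b))); first exact: (proj2_sig (e b)).
exists (fun t => exist _ (proj1_sig (e (proj1_sig (f t)))) (proj2_sig (f t))).
by move=> t1 t2 [] /ve_inj /proj1_sig_inj /f_inj.
Qed.

Definition segment_intersections_open (X : topologicalType) (I : Type)
    (w : strict_well_order I) : Prop :=
  forall b (G : {c | w c b} -> set X), (forall j, open (G j)) -> open (\bigcap_j G j).

Lemma Pnumber_segment_intersections_open (X : topologicalType) (A : Type) :
  is_Pnumber X A -> exists w : strict_well_order A, segment_intersections_open X w.
Proof.
move=> [_ Pnum]; have [X_discrete|X_nondiscrete] := pselect (discrete_top X).
  by have [w] := exists_strict_well_order A; exists w => b G _; apply: X_discrete.
have [w w_initial] := exists_initial_well_order A.
exists w => b G G_open; apply: (Pnum X_nondiscrete).2 => //.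
  by apply/card_leT_injP; exists (@proj1_sig _ _); apply: proj1_sig_inj.
by move=> /card_leT_injP; apply: w_initial.
Qed.

Section Cells.
Variables (T : Type) (F : set (set T)).
Hypothesis F_disjoint : forall V W x, F V -> F W -> V x -> W x -> V = W.

(* [set0] when no member of [F] contains [x]. *)
Definition cell (x : T) : set T :=
  if pselect (exists2 b, F b & b x) is left h then s2val (cid2 h) else set0.

Lemma cellE x b : F b -> b x -> cell x = b.
Proof.
move=> Fb bx; rewrite /cell; case: pselect => [h|[]]; last by exists b.
by case: (cid2 h) => b' Fb' b'x /=; apply: F_disjoint b'x bx.
Qed.

Lemma cell_none x : ~ (exists2 b, F b & b x) -> cell x = set0.
Proof. by rewrite /cell; case: pselect. Qed.

Lemma cell_self x y : cell x y -> F (cell x) /\ cell x x.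
Proof. by rewrite /cell; case: pselect => [h _|//]; case: (cid2 h). Qed.

Lemma cell_eq_mem x y : cell x x -> cell y = cell x -> cell x y.
Proof.
move=> cxx cyx; have cyx_x : cell y x by rewrite cyx.
by have [_] := cell_self cyx_x; rewrite cyx.
Qed.

End Cells.

Section DiscreteFamily.
Variables (X : topologicalType) (F : set (set X)).
Hypothesis F_discrete : discrete_family F.

Lemma discrete_family_disjoint V W x : F V -> F W -> V x -> W x -> V = W.
Proof.
move=> FV FW Vx Wx; have [U Ux U_meets_one] := F_discrete x.
by apply: U_meets_one => //; exists x; split => //; apply: nbhs_singleton.
Qed.

Lemma discrete_family_closed_bigcup : F `<=` closed -> closed (\bigcup_(b in F) b).
Proof.
move=> F_closed; rewrite -[X in closed X]setCK closedC openE => x /= x_out.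
have [U Ux U_meets_one] := F_discrete x.
have [[W [FW UW]]|U_misses] := pselect (exists W, F W /\ U `&` W !=set0).
  have W'x : nbhs x (~` W).
    apply: open_nbhs_nbhs; split; first by apply: closed_openC; apply: F_closed.
    by move=> Wx; apply: x_out; exists W.
  apply: filterS (filterI Ux W'x) => y [Uy W'y] [b Fb by_].
  by apply: W'y; rewrite -(U_meets_one b W) //; exists y.
apply: filterS Ux => y Uy [b Fb by_].
by apply: U_misses; exists b; split => //; exists y.
Qed.

Lemma cell_fiber_open : F `<=` clopen -> forall x, open [set y | cell F y = cell F x].
Proof.
move=> F_clopen x; have [[b Fb bx]|no_cell] := pselect (exists2 b, F b & b x).
  have cellxE := cellE discrete_family_disjoint Fb bx.
  suff -> : [set y | cell F y = cell F x] = b by have [] := F_clopen _ Fb.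
  apply/seteqP; split => y /=; rewrite cellxE.
    by move=> cyb; rewrite -cellxE; apply: cell_eq_mem; rewrite ?cellxE.
  exact: (@cellE _ F discrete_family_disjoint y b Fb).
suff -> : [set y | cell F y = cell F x] = ~` \bigcup_(b in F) b.
  by apply: closed_openC; apply: discrete_family_closed_bigcup => b /F_clopen[].
apply/seteqP; split => y /=; rewrite (cell_none no_cell).
  move=> cy0 [b Fb by_].
  by move: (by_); rewrite -(cellE discrete_family_disjoint Fb by_) cy0.
by move=> y_out; apply: cell_none => -[b Fb by_]; apply: y_out; exists b.
Qed.

End DiscreteFamily.

Lemma open_preimage_order_topology (X : topologicalType) (d : Order.disp_t)
    (L : orderType d) (f : X -> order_topology L) :
  (forall l, open [set x | (l < f x)%O]) -> (forall r, open [set x | (f x < r)%O]) ->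
  forall U : set (order_topology L), open U -> open (f @^-1` U).
Proof.
move=> f_gt f_lt U oU; rewrite openE => x Ufx.
have : nbhs (f x) U by apply: open_nbhs_nbhs.
rewrite itv_nbhsE => -[i [oi fxi] iU].
apply: (@filterS _ _ _ (f @^-1` [set` i])); first by move=> y /iU.
apply: open_nbhs_nbhs; split => //.
have open_rray l : open (f @^-1` `]l, +oo[).
  suff -> : f @^-1` `]l, +oo[ = [set x | (l < f x)%O] by apply: f_gt.
  by apply/seteqP; split=> y; rewrite /= in_itv /= andbT.
have open_lray r : open (f @^-1` `]-oo, r[).
  suff -> : f @^-1` `]-oo, r[ = [set x | (f x < r)%O] by apply: f_lt.
  by apply/seteqP; split=> y; rewrite /= in_itv.
case: i oi {fxi iU} => [[[]l|[]] [[]r|[]]] //= _.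
- rewrite set_itv_splitI preimage_setI.
  by apply: openI; [apply: open_rray|apply: open_lray].
- by rewrite set_itvE preimage_setT; apply: openT.
Qed.

Section LexContinuity.
Variables (X : topologicalType) (I : Type) (w : strict_well_order I).
Variables (d : Order.disp_t) (V : orderType d) (f : X -> I -> V).
Hypothesis f_fiber_open : forall a x, open [set y | f y a = f x a].
Hypothesis w_segments : segment_intersections_open X w.

Lemma nbhs_lex_prefix x b :
  nbhs x [set y | forall c, w c b \/ c = b -> f y c = f x c].
Proof.
pose G (j : {c | w c b}) := [set y | f y (proj1_sig j) = f x (proj1_sig j)].
apply: (@filterS _ _ _ ((\bigcap_j G j) `&` [set y | f y b = f x b])).
  by move=> y [Gy fyb] c [cb|->] //; apply: (Gy (exist _ c cb)).
apply: open_nbhs_nbhs; split; last by split => // j _.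
by apply: openI => //; apply: w_segments => j; apply: f_fiber_open.
Qed.

Lemma open_lexlt_gt g : open [set x | lexlt w g (f x)].
Proof.
rewrite openE => x [b gf fb]; apply: filterS (nbhs_lex_prefix x b) => y fyx.
exists b => [c cb|]; first by rewrite fyx ?gf //; left.
by rewrite fyx //; right.
Qed.

Lemma open_lexlt_lt g : open [set x | lexlt w (f x) g].
Proof.
rewrite openE => x [b fg fb]; apply: filterS (nbhs_lex_prefix x b) => y fyx.
exists b => [c cb|]; first by rewrite fyx ?fg //; left.
by rewrite fyx //; right.
Qed.

Lemma lex_open_preimage (U : set (order_topology (ordered_by (lex_order w V)))) :
  open U -> open (f @^-1` U).
Proof.
have ltE (g h : ordered_by (lex_order w V)) : (g < h)%O <-> lexlt w g h.
  exact: ordered_by_ltE.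
apply: open_preimage_order_topology => g.
- by move: (open_lexlt_gt g); congr open; apply/seteqP; split => x /ltE.
- by move: (open_lexlt_lt g); congr open; apply/seteqP; split => x /ltE.
Qed.

End LexContinuity.

Lemma GO_space_embedding (X : topologicalType) (d : Order.disp_t) (L : orderType d)
    (f : X -> order_topology L) :
  injective f ->
  (forall U : set (order_topology L), open U -> open (f @^-1` U)) ->
  (forall (U : set X) x, open U -> U x ->
     exists2 W : set (order_topology L), open W & W (f x) /\ f @^-1` W `<=` U) ->
  GO_space X.
Proof.
move=> f_inj f_cont f_local; exists d, L, f; split => // U.
split=> [oU|[W [oW ->]]]; last exact: f_cont.
exists (\bigcup_(W in [set W | open W /\ f @^-1` W `<=` U]) W); split.
  by apply: bigcup_open => W [].
apply/seteqP; split => [x Ux|y [W [_ WU] Wfy]]; last exact: WU.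
by have [W oW [Wfx WU]] := f_local U x oU Ux; exists W.
Qed.

Section Code.
Variables (X : topologicalType) (A : Type) (B : A -> set (set X)).
Variables (w : strict_well_order A) (wK : strict_total_order (set X)).
Hypothesis B_clopen : forall a, B a `<=` clopen.
Hypothesis B_discrete : forall a, discrete_family (B a).

Let Lex := ordered_by (lex_order w (ordered_by wK *l nat)).

(* The constant second coordinate leaves room for the endpoints of the
   intervals in [code_cell_interval]. *)
Definition code (x : X) : Lex := fun a => (cell (B a) x : ordered_by wK, 1%N).

Lemma code_fiber_open a x : open [set y | code y a = code x a].
Proof.
suff -> : [set y | code y a = code x a] = [set y | cell (B a) y = cell (B a) x].
  exact: cell_fiber_open.
by apply/seteqP; split => y /= => [[]|cyx]; last by rewrite /code cyx.
Qed.

Lemma basis_cell (U : set X) x : basis (\bigcup_a B a) -> open U -> U x ->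
  exists a, cell (B a) x x /\ cell (B a) x `<=` U.
Proof.
move=> [_ B_nbhs] oU Ux.
have [b [[a _ Bb] bx] bU] := B_nbhs x U (open_nbhs_nbhs (conj oU Ux)).
by exists a; rewrite (cellE (@discrete_family_disjoint _ _ (B_discrete a)) Bb bx).
Qed.

Lemma code_inj : accessible_space X -> basis (\bigcup_a B a) -> injective code.
Proof.
move=> X_T1 B_basis x y cxy.
apply: contrapT => /eqP/X_T1[U [oU /set_mem Ux /set_mem nUy]].
have [a [cxx cU]] := basis_cell B_basis oU Ux.
apply/nUy/cU/cell_eq_mem => //.
by case: (congr1 (fun g : Lex => g a) cxy) => ->.
Qed.

Lemma code_cell_interval a x : cell (B a) x x ->
  exists2 W : set (order_topology Lex),
    open W & W (code x) /\ code @^-1` W `<=` cell (B a) x.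
Proof.
move=> cxx; pose lo : Lex := update (code x) a (cell (B a) x, 0%N).
pose hi : Lex := update (code x) a (cell (B a) x, 2%N).
exists `]lo, hi[; first exact: itv_open.
split.
  rewrite /= in_itv /=; apply/andP; split; apply/ordered_by_ltE.
  - by apply: lexlt_update_lt; rewrite ltxi_pair lexx.
  - by apply: lexlt_update_gt; rewrite ltxi_pair lexx.
move=> y; rewrite /= in_itv /= => /andP[/ordered_by_ltE lo_y /ordered_by_ltE y_hi].
have /andP[] := lexlt_update_between lo_y y_hi; rewrite !lexi_pair /=.
move=> /andP[cxy _] /andP[cyx _]; apply: cell_eq_mem => //.
by apply: (@le_anti _ (ordered_by wK)); rewrite cyx cxy.
Qed.

End Code.

Theorem theorem2p1 (X : topologicalType) (A : Type)
  (B : A -> set (set X)) :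
  tychonoff_space X ->
  is_Pnumber X A ->
  (forall a, B a `<=` clopen) ->
  (forall a, discrete_family (B a)) ->
  basis (\bigcup_a B a) ->
  GO_space X.
Proof.
move=> [X_T1 _] X_Pnumber B_clopen B_discrete B_basis.
have [w w_segments] := Pnumber_segment_intersections_open X_Pnumber.
have [wK] := exists_strict_well_order (set X).
apply: (@GO_space_embedding _ _ _ (code B w wK)).
- exact: code_inj.
- by move=> U; apply: lex_open_preimage => //; apply: code_fiber_open.
- move=> U x oU Ux; have [a [cxx cU]] := basis_cell B_discrete B_basis oU Ux.
  have [W oW [Wx WU]] := code_cell_interval w wK cxx.
  by exists W => //; split => // y /WU /cU.
Qed.
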